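(* Let $\delta>0$ and $x_0>0$. Call a pair $(x(\cdot),y(\cdot))$ admissible if $y:[0,\infty)\to(0,\infty)$ is Lebesgue measurable and locally bounded and $x:[0,\infty)\to\mathbb{R}$ is the (locally absolutely continuous, Carathéodory) solution on $[0,\infty)$ of $\dot x(t)=x(t)(1-x(t))-y(t)x(t)$, $x(0)=x_0$. Then for every admissible pair the limit \[ \lim_{T\to\infty}\int_0^T e^{-\delta t}\big[\ln x(t)+\ln y(t)\big]\,dt \] exists and is either finite or equal to $-\infty$. *)

From HB Require Import structures.
From mathcomp Require Import all_boot all_order all_algebra.
From mathcomp Require Import all_classical all_reals all_analysis.
Set Implicit Arguments. Unset Strict Implicit. Unset Printing Implicit Defensive.
Import Order.TTheory GRing.Theory Num.Theory.
Import numFieldNormedType.Exports.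
Local Open Scope classical_set_scope.
Local Open Scope ring_scope.

Definition rhs (R : realType) (x y : R -> R) (s : R) : R :=
  x s * (1 - x s) - y s * x s.

(* (x, y) is admissible for initial value x0:
   - y : [0,oo) -> (0,oo) is Lebesgue measurable and locally bounded;
   - x is the Caratheodory solution on [0,oo) of x' = x(1-x) - y x, x(0)=x0,
     i.e. for every t >= 0 the right-hand side is Lebesgue integrable on
     [0,t] and x t = x0 + int_0^t rhs (this integral form is equivalent to
     x locally absolutely continuous satisfying the ODE a.e.). *)
Definition admissible (R : realType) (x0 : R) (x y : R -> R) : Prop :=
  [/\ measurable_fun (`[0%R, +oo[%classic : set R) y,
      (forall t, 0 <= t -> 0 < y t),
      (forall T, 0 <= T -> exists M : R, forall t, 0 <= t <= T -> y t <= M)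
    & (forall t, 0 <= t ->
        (@lebesgue_measure R).-integrable `[0%R, t]%classic
            (fun s => (rhs x y s)%:E) /\
        x t = x0 + \int[@lebesgue_measure R]_(s in `[0%R, t]%classic) rhs x y s)].

(** The control enters the state equation linearly, so x solves the linear
    integral equation x(t) = x0 + ∫_0^t x(s) g(s) ds with g = 1 - x - y locally
    bounded; on short intervals x moves by at most a quarter of its maximum,
    hence x stays positive.  Then ln x + ln y = ln (x y) <= x y, and the state
    equation gives x y <= 1/4 - x', so ∫_0^T x y <= x0 + T/4.  A primitive of
    linear growth makes the discounted integral of x y finite, hence the positive
    part of the discounted utility is integrable; its negative part has a
    monotone limit in [0, +oo], so the integrals over [0, T] converge in
    [-oo, +oo). *)

From HB Require Import structures.
From mathcomp Require Import all_boot all_order all_algebra.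
From mathcomp Require Import all_classical all_reals all_analysis.
From mathcomp Require Import ring lra.
Import measurable_realfun.
Import Order.TTheory GRing.Theory Num.Theory.
Import numFieldNormedType.Exports.
Local Open Scope classical_set_scope.
Local Open Scope ring_scope.
Local Notation mu := (@lebesgue_measure _).

Lemma lebesgue_measure_itvcc_fine (R : realType) (a b : R) : a <= b ->
  fine (mu `[a, b]) = b - a.
Proof.
move=> ab; rewrite lebesgue_measure_itv /= lte_fin.
by case: ltgtP ab => // -> _; rewrite subrr.
Qed.

Lemma normr_Rintegral_itv_le (R : realType) (a b C : R) (h : R -> R) : a <= b ->
  mu.-integrable `[a, b] (EFin \o h) ->
  (forall t, a <= t <= b -> `|h t| <= C) ->
  `|\int[mu]_(t in `[a, b]) h t| <= C * (b - a).
Proof.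
move=> ab hi hC.
have Ci : mu.-integrable `[a, b] (EFin \o cst C).
  apply: continuous_compact_integrable; first exact: segment_compact.
  by move=> ?; exact: cvg_cst.
apply: (le_trans (le_normr_Rintegral _ hi)) => //.
apply: (@le_trans _ _ (\int[mu]_(t in `[a, b]) C)).
  by apply: le_Rintegral => //; exact: integrable_norm hi.
by rewrite Rintegral_cst // lebesgue_measure_itvcc_fine.
Qed.

Lemma measurable_expR_mull (R : realType) (D : set R) (k : R) :
  measurable_fun D (fun t => expR (k * t)).
Proof. by apply: measurableT_comp; [exact: measurable_expR | exact: measurable_funM]. Qed.

Lemma lnD_le_mul (R : realType) (u v : R) : 0 < u -> 0 < v -> ln u + ln v <= u * v.
Proof. by move=> u0 v0; rewrite -lnM ?posrE // ltW // ln_sublinear ?mulr_gt0. Qed.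

Section linear_integral_equation.
Context {R : realType} {f g : R -> R} {c : R}.
Hypothesis f_eq : forall t, 0 <= t ->
  mu.-integrable `[0, t] (fun s => (f s * g s)%:E) /\
  f t = c + \int[mu]_(s in `[0, t]) (f s * g s).

Lemma sol0 : f 0 = c.
Proof. by have [_ ->] := f_eq 0 (lexx 0); rewrite set_itv1 Rintegral_set1 addr0. Qed.

Lemma continuous_sol b : 0 <= b -> {within `[0, b], continuous f}.
Proof.
move=> b0; have [fgi _] := f_eq b b0.
have cF := parameterized_integral_continuous b0 fgi.
have cF' : {within `[0, b], continuous
    (fun t => c + parameterized_integral mu 0 t (fun s => f s * g s))}.
  by move=> t; apply: cvgD; [exact: cvg_cst | exact: cF].
apply: subspace_eq_continuous cF' => t; rewrite inE /= in_itv /= => /andP[t0 _].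
by rewrite /from_subspace /=; have [_ ->] := f_eq t t0.
Qed.

Lemma sol_increment a b : 0 <= a -> a <= b ->
  mu.-integrable `[a, b] (fun s => (f s * g s)%:E) /\
  f b - f a = \int[mu]_(s in `[a, b]) (f s * g s).
Proof.
move=> a0 ab; have [fgi ->] := f_eq b (le_trans a0 ab); have [_ ->] := f_eq a a0.
have fgiab : mu.-integrable `[a, b] (fun s => (f s * g s)%:E).
  by apply: integrableS fgi => //; apply: subset_itvr; rewrite bnd_simp.
split => //; rewrite opprD addrACA subrr add0r Rintegral_itvB ?bnd_simp //.
rewrite Rintegral_itv_obnd_cbnd //.
by apply: integrableS fgiab => //; apply: subset_itvr; rewrite bnd_simp.
Qed.

(* With m the maximum of |f| on [a, b], every increment of f on [a, b] is at
   most m K (b - a) <= m / 4 in absolute value; applied at the argmax this gives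
   m <= 4/3 f a, hence f b >= f a - m / 4 >= 2/3 f a. *)
Lemma sol_gt0_step a b K : 0 <= a -> a <= b ->
  (forall t, a <= t <= b -> `|g t| <= K) -> K * (b - a) <= 4^-1 ->
  0 < f a -> 0 < f b.
Proof.
move=> a0 ab gK Kab fa0.
have K0 : 0 <= K by apply: le_trans (gK a _); rewrite ?lexx.
have cf : {within `[a, b], continuous (fun t => `|f t|)}.
  have cfab : {within `[a, b], continuous f}.
    apply: (@continuous_subspaceW _ _ _ `[0, b]).
      by apply: subset_itvScc; rewrite bnd_simp.
    exact: continuous_sol (le_trans a0 ab).
  by move=> t; apply: cvg_norm; exact: cfab.
have [d dab dmax] := EVT_max ab cf.
set m := `|f d| in dmax.
have drift u : a <= u <= b -> `|f u - f a| <= m / 4.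
  move=> /andP[au ub]; have [fgi ->] := sol_increment a u a0 au.
  apply: le_trans (@normr_Rintegral_itv_le _ a u (m * K) _ au fgi _) _.
    move=> t /andP[ta tu]; rewrite normrM ler_pM //.
      by apply: dmax; rewrite in_itv /= ta (le_trans tu ub).
    by apply: gK; rewrite ta (le_trans tu ub).
  rewrite -mulrA; apply: ler_wpM2l; first exact: normr_ge0.
  by apply: (le_trans _ Kab); apply: ler_wpM2l; rewrite // lerD2r.
move: (drift b) (drift d); rewrite lexx ab; rewrite in_itv /= in dab.
move=> /(_ isT) /ler_normlP[fb _] /(_ dab) /ler_normlP[fd1 fd2].
have m0 : 0 <= m := normr_ge0 _.
have : m = f d \/ m = - f d by rewrite /m; case: (ler0P (f d)) => _; [right | left].
lra.
Qed.

Hypothesis g_locally_bounded :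
  forall b, 0 <= b -> exists K, forall t, 0 <= t <= b -> `|g t| <= K.

Lemma sol_gt0 : 0 < c -> forall t, 0 <= t -> 0 < f t.
Proof.
move=> c0 T T0; have [K gK] := g_locally_bounded T T0.
set K1 := Num.max K 1; set h := (4 * K1)^-1.
have K10 : 0 < K1 by rewrite lt_max ltr01 orbT.
have h0 : 0 < h by rewrite invr_gt0 mulr_gt0.
have K1h : K1 * h = 4^-1 by rewrite /h invfM mulrCA divff ?gt_eqF // mulr1.
suff steps n : forall t, 0 <= t <= T -> t <= n%:R * h -> 0 < f t.
  apply: (steps (Num.bound (T / h))); rewrite ?T0 ?lexx // -ler_pdivrMr //.
  by apply: ltW; apply: archi_boundP; rewrite divr_ge0 // ltW.
elim: n => [|n IH] t /andP[t0 tT].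
  rewrite mul0r => t_le0; have -> : t = 0 by apply/le_anti; rewrite t_le0 t0.
  by rewrite sol0.
rewrite -natr1 mulrDl mul1r => tn1.
have [tn|nt] := leP t (n%:R * h); first by apply: IH; rewrite ?t0.
have n0 : 0 <= n%:R * h by rewrite mulr_ge0 // ltW.
apply: (sol_gt0_step _ _ K1 n0 (ltW nt)).
- move=> s /andP[ns st]; apply: le_trans (gK s _) _; last by rewrite le_max lexx.
  by rewrite (le_trans n0 ns) (le_trans st tT).
- by rewrite -K1h ler_pM2l // lerBlDl.
- by apply: IH; rewrite ?n0 //= (le_trans (ltW nt) tT).
Qed.

End linear_integral_equation.

Lemma expR_affine_le_geometric (R : realType) (d a b : R) (n : nat) :
  0 < d -> 0 <= a -> 0 <= b ->
  expR (- d * n%:R) * (a + b * n.+1%:R) <= (a + b + 2 * b / d) * expR (- d / 2) ^+ n.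
Proof.
move=> d0 a0 b0; set q := expR (- d / 2) ^+ n; set m : R := n%:R.
have m0 : 0 <= m by [].
have qE : q = expR (m * (- d / 2)) by rewrite expRM_natl.
have q0 : 0 < q by rewrite qE expR_gt0.
have q1 : q <= 1.
  by rewrite qE -expR0 ler_expR mulr_ge0_le0 // mulNr oppr_le0 divr_ge0 // ltW.
have qq : expR (- d * m) = q * q by rewrite qE -expRD; congr expR; field.
have mq : m * q <= 2 / d.
  have qinv : q * expR (m * (d / 2)) = 1.
    by rewrite qE -expRD -expR0; congr expR; field.
  have := expR_ge1Dx (m * (d / 2)).
  rewrite ler_pdivlMr // => E; nra.
rewrite qq -natr1 -/m.
have h1 : q * q * a <= q * a by rewrite -mulrA ler_piMl ?mulr_ge0 // ltW.
have h2 : q * q * b <= q * b by rewrite -mulrA ler_piMl ?mulr_ge0 // ltW.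
have h3 : q * (b * (m * q)) <= q * (b * (2 / d)) by rewrite ler_pM2l // ler_wpM2l.
lra.
Qed.

Lemma nneseries_geometric_lt_pinfty (R : realType) (C q : R) :
  0 <= C -> 0 < q < 1 -> (\sum_(n <oo) (C * q ^+ n)%:E < +oo)%E.
Proof.
move=> C0 /andP[q0 q1]; apply: (@le_lt_trans _ _ (C / (1 - q))%:E); last exact: ltry.
apply: lime_le.
  by apply: is_cvg_nneseries => n _ _; rewrite lee_fin mulr_ge0 // exprn_ge0 // ltW.
apply: nearW => n; rewrite sumEFin lee_fin.
by apply: geometric_le_lim; rewrite // gtr0_norm.
Qed.

Lemma itv0y_bigcup_itvnSn (R : realType) :
  (`[0, +oo[%classic : set R) = \bigcup_n `[n%:R, n.+1%:R[%classic.
Proof.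
apply/seteqP; split => t /=.
- rewrite in_itv /= andbT => t0; exists (Num.truncn t) => //.
  by rewrite /= in_itv /=; exact: truncn_itv.
- case=> n _; rewrite /= !in_itv /= andbT => /andP[nt _].
  exact: le_trans (ler0n R n) nt.
Qed.

Lemma trivIset_itvnSn (R : realType) :
  trivIset setT (fun n => `[n%:R, n.+1%:R[%classic : set R).
Proof.
move=> i j _ _ [t []]; rewrite /= !in_itv /= => /andP[it ti] /andP[jt tj].
apply/eqP; rewrite eqn_leq; apply/andP; split; rewrite -ltnS -(ltr_nat R).
- exact: le_lt_trans it tj.
- exact: le_lt_trans jt ti.
Qed.

Section discounted_integral.
Context {R : realType} (d a b : R) (f : R -> R).
Hypotheses (d_gt0 : 0 < d) (a_ge0 : 0 <= a) (b_ge0 : 0 <= b).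
Hypothesis mf : measurable_fun (`[0, +oo[ : set R) f.
Hypothesis f_ge0 : forall t, 0 <= t -> 0 <= f t.
Hypothesis f_lin :
  forall T, 0 <= T -> (\int[mu]_(t in `[0%R, T]) (f t)%:E <= (a + b * T)%:E)%E.

Let discounted t := (expR (- d * t) * f t)%:E.

Let discounted_ge0 t : 0 <= t -> (0 <= discounted t)%E.
Proof. by move=> t0; rewrite lee_fin mulr_ge0 ?expR_ge0 ?f_ge0. Qed.

Let measurable_discounted : measurable_fun (`[0, +oo[ : set R) discounted.
Proof.
by apply/measurable_EFinP; apply: measurable_funM mf; exact: measurable_expR_mull.
Qed.

Lemma discounted_integral_itvnSn_le n :
  (\int[mu]_(t in `[n%:R, n.+1%:R[) discounted t <=
    (expR (- d * n%:R) * (a + b * n.+1%:R))%:E)%E.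
Proof.
set c := expR (- d * n%:R).
have sub : `[n%:R, n.+1%:R[ `<=` (`[0%R, n.+1%:R] : set R).
  by apply: subset_itv; rewrite bnd_simp.
have sub0 : (`[0%R, n.+1%:R] : set R) `<=` `[0%R, +oo[.
  by apply: subset_itvl; rewrite bnd_simp.
have mcf : measurable_fun (`[0%R, n.+1%:R] : set R) (fun t => (c%:E * (f t)%:E)%E).
  apply: emeasurable_funM; first exact: measurable_cst.
  by apply/measurable_EFinP; exact: measurable_funS mf.
apply: (@le_trans _ _ (\int[mu]_(t in `[n%:R, n.+1%:R[) (c%:E * (f t)%:E))%E).
  apply: ge0_le_integral => //.
  - move=> t; rewrite /= in_itv /= => /andP[nt _].
    by apply: discounted_ge0; exact: le_trans (ler0n R n) nt.
  - by apply: measurable_funS measurable_discounted => //; exact: subset_trans sub sub0.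
  - exact: measurable_funS mcf.
  - move=> t; rewrite /= in_itv /= => /andP[nt _].
    rewrite -EFinM lee_fin ler_wpM2r ?f_ge0 //; first exact: le_trans (ler0n R n) nt.
    by rewrite ler_expR !mulNr lerN2 ler_wpM2l // ltW.
apply: (@le_trans _ _ (\int[mu]_(t in `[0%R, n.+1%:R]) (c%:E * (f t)%:E))%E).
  apply: ge0_subset_integral => // t; rewrite /= in_itv /= => /andP[t0 _].
  by rewrite -EFinM lee_fin mulr_ge0 ?expR_ge0 ?f_ge0.
rewrite ge0_integralZl_EFin ?expR_ge0 //.
- by rewrite EFinM lee_wpmul2l ?lee_fin ?expR_ge0 ?f_lin.
- by move=> t; rewrite /= in_itv /= => /andP[t0 _]; rewrite lee_fin f_ge0.
- by apply/measurable_EFinP; exact: measurable_funS mf.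
Qed.

Lemma discounted_integral_lt_pinfty :
  (\int[mu]_(t in `[0%R, +oo[) (expR (- d * t) * f t)%:E < +oo)%E.
Proof.
rewrite itv0y_bigcup_itvnSn ge0_integral_bigcup //; last 3 first.
- by rewrite -itv0y_bigcup_itvnSn.
- by rewrite -itv0y_bigcup_itvnSn => t /=; rewrite in_itv /= andbT; exact: discounted_ge0.
- exact: trivIset_itvnSn.
have q01 : 0 < expR (- d / 2) < 1.
  by rewrite expR_gt0 /= -expR0 ltr_expR mulNr oppr_lt0 divr_gt0.
have C0 : 0 <= a + b + 2 * b / d by rewrite !addr_ge0 ?divr_ge0 ?mulr_ge0 // ltW.
apply: le_lt_trans; last exact: nneseries_geometric_lt_pinfty C0 q01.
apply: lee_nneseries => [n _ _|n _].
  apply: integral_ge0 => t /=; rewrite in_itv /= => /andP[nt _].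
  by apply: discounted_ge0; exact: le_trans (ler0n R n) nt.
apply: le_trans (discounted_integral_itvnSn_le n) _.
by rewrite lee_fin expR_affine_le_geometric.
Qed.

End discounted_integral.

Section integral_itv0_cvg.
Context {R : realType}.
Local Open Scope ereal_scope.

Lemma nondecreasing_integral_itv0 (F : R -> \bar R) :
  measurable_fun (`[0%R, +oo[ : set R) F -> (forall t, 0 <= F t) ->
  nondecreasing_fun (fun T => \int[mu]_(t in `[0%R, T]) F t).
Proof.
move=> mF F0 T1 T2 T12; apply: ge0_subset_integral => //.
- by apply: measurable_funS mF => //; apply: subset_itvl; rewrite bnd_simp.
- by apply: subset_itvl; rewrite bnd_simp.
Qed.

Lemma cvg_integral_itv0 (G : R -> \bar R) :
  measurable_fun (`[0%R, +oo[ : set R) G ->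
  \int[mu]_(t in `[0%R, +oo[) G^\+ t < +oo ->
  exists l, l != +oo /\ (fun T => \int[mu]_(t in `[0%R, T]) G t) @ +oo%R --> l.
Proof.
move=> mG Gp_fin.
have Acvg := nondecreasing_cvge
  (nondecreasing_integral_itv0 _ (measurable_funepos mG) (funepos_ge0 G)).
have Bcvg := nondecreasing_cvge
  (nondecreasing_integral_itv0 _ (measurable_funeneg mG) (funeneg_ge0 G)).
set sA := ereal_sup _ in Acvg; set sB := ereal_sup _ in Bcvg.
have sA0 : 0 <= sA.
  apply: le_trans (ereal_sup_ubound _); last by exists 0%R.
  by apply: integral_ge0 => t _; exact: funepos_ge0.
have sB0 : 0 <= sB.
  apply: le_trans (ereal_sup_ubound _); last by exists 0%R.
  by apply: integral_ge0 => t _; exact: funeneg_ge0.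
have sA_fin : sA < +oo.
  apply: le_lt_trans Gp_fin; apply: ge_ereal_sup => _ [T _ <-].
  apply: ge0_subset_integral => //; first exact: measurable_funepos.
  by apply: subset_itvl; rewrite bnd_simp.
exists (sA - sB); split.
  rewrite lt_eqF //; apply: le_lt_trans sA_fin.
  by rewrite -[leRHS]sube0; apply: leeB.
under eq_fun do rewrite integralE.
by apply: cvgeB => //; apply: fin_num_adde_defr; rewrite ge0_fin_numE.
Qed.

End integral_itv0_cvg.

Section admissible.
Context {R : realType} {x0 : R} {x y : R -> R}.
Hypothesis adm : admissible x0 x y.

Lemma rhsE : rhs x y = fun s => x s * (1 - x s - y s).
Proof. by apply/funext => s; rewrite /rhs; ring. Qed.

Lemma admissible_sol t : 0 <= t ->
  mu.-integrable `[0, t] (fun s => (x s * (1 - x s - y s))%:E) /\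
  x t = x0 + \int[mu]_(s in `[0, t]) (x s * (1 - x s - y s)).
Proof. by case: adm => _ _ _ /(_ t); rewrite rhsE. Qed.

Lemma admissible_gt0 : 0 < x0 -> forall t, 0 <= t -> 0 < x t.
Proof.
apply: (sol_gt0 (g := fun s => 1 - x s - y s) admissible_sol) => b b0.
have [_ y_gt0 y_bounded _] := adm.
have [M yM] := y_bounded b b0.
have cx : {within `[0, b], continuous (fun t => `|x t|)}.
  have := continuous_sol (g := fun s => 1 - x s - y s) admissible_sol b b0.
  by move=> cx t; apply: cvg_norm; exact: cx.
have [c _ xc] := EVT_max b0 cx.
exists (1 + `|x c| + M) => t /andP[t0 tb].
have xt : `|x t| <= `|x c| by apply: xc; rewrite in_itv /= t0.
have := yM t; rewrite t0 tb => /(_ isT) ytM.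
move: xt; rewrite !ler_norml => /andP[xt1 xt2]; have yt := y_gt0 t t0.
by apply/andP; split; lra.
Qed.

Lemma measurable_admissible : measurable_fun (`[0, +oo[ : set R) x.
Proof.
rewrite itv0y_bigcup0S; apply/measurable_fun_bigcup => // n.
apply: subspace_continuous_measurable_fun => //.
exact: (continuous_sol (g := fun s => 1 - x s - y s) admissible_sol n.+1%:R).
Qed.

Lemma measurable_admissible_xy : measurable_fun (`[0, +oo[ : set R) (fun t => x t * y t).
Proof. by have [ym _ _ _] := adm; exact: measurable_funM measurable_admissible ym. Qed.

Lemma integral_xy_le T : 0 < x0 -> 0 <= T ->
  (\int[mu]_(t in `[0%R, T]) (x t * y t)%:E <= (x0 + T / 4)%:E)%E.
Proof.
move=> x0_gt0 T0.
have [_ y_gt0 _ _] := adm.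
have [rhsi xT] := admissible_sol T T0.
have ci : mu.-integrable `[0, T] (EFin \o cst (4^-1 : R)).
  apply: continuous_compact_integrable; first exact: segment_compact.
  by move=> ?; exact: cvg_cst.
have bi : mu.-integrable `[0, T] (EFin \o (fun t => 4^-1 - x t * (1 - x t - y t))).
  exact: integrableB _ ci rhsi.
apply: (@le_trans _ _
    (\int[mu]_(t in `[0%R, T]) (4^-1 - x t * (1 - x t - y t))%:E)%E).
  apply: ge0_le_integral => //.
  - move=> t; rewrite /= in_itv /= => /andP[t0 _].
    by rewrite lee_fin mulr_ge0 // ltW ?admissible_gt0 ?y_gt0.
  - apply/measurable_EFinP; apply: measurable_funS measurable_admissible_xy => //.
    by apply: subset_itvl.
  - exact: measurable_int bi.
  - move=> t _; rewrite lee_fin -subr_ge0.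
    have -> : 4^-1 - x t * (1 - x t - y t) - x t * y t = (x t - 2^-1) ^+ 2.
      by rewrite expr2; field.
    exact: sqr_ge0.
rewrite -(fineK (integrable_fin_num _ bi)) // lee_fin.
change (\int[mu]_(t in `[0, T]) (4^-1 - x t * (1 - x t - y t)) <= x0 + T / 4).
rewrite RintegralB // Rintegral_cst // lebesgue_measure_itvcc_fine // subr0.
by have := admissible_gt0 x0_gt0 T T0; lra.
Qed.

Lemma discounted_integral_xy_lt_pinfty delta : 0 < delta -> 0 < x0 ->
  (\int[mu]_(t in `[0%R, +oo[) (expR (- delta * t) * (x t * y t))%:E < +oo)%E.
Proof.
move=> delta0 x0_gt0; have [_ y_gt0 _ _] := adm.
apply: (@discounted_integral_lt_pinfty _ delta x0 4^-1 _ delta0 (ltW x0_gt0) _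
  measurable_admissible_xy) => //.
- by move=> t t0; rewrite mulr_ge0 ?ltW ?admissible_gt0 ?y_gt0.
- by move=> T T0; rewrite mulrC; exact: integral_xy_le.
Qed.

End admissible.

Theorem lemma7p2 (R : realType) (delta x0 : R) (x y : R -> R) :
  0 < delta -> 0 < x0 -> admissible x0 x y ->
  exists l : \bar R, l != +oo%E /\
    ((fun T : R => (\int[@lebesgue_measure R]_(t in `[0%R, T]%classic)
        (expR (- delta * t) * (ln (x t) + ln (y t)))%:E)%E)
       @ +oo --> l).
Proof.
move=> delta0 x0_gt0 adm; have [ym y_gt0 _ _] := adm.
have mx := measurable_admissible adm.
set G := fun t => (expR (- delta * t) * (ln (x t) + ln (y t)))%:E.
have mG : measurable_fun (`[0, +oo[ : set R) G.
  apply/measurable_EFinP; apply: measurable_funM; first exact: measurable_expR_mull.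
  by apply: measurable_funD; apply: measurableT_comp (@measurable_ln R) _.
apply: (cvg_integral_itv0 _ mG).
apply: le_lt_trans; last exact: discounted_integral_xy_lt_pinfty adm delta delta0 x0_gt0.
apply: ge0_le_integral => //.
- exact: measurable_funepos mG.
- apply/measurable_EFinP; apply: measurable_funM (measurable_admissible_xy adm).
  exact: measurable_expR_mull.
- move=> t; rewrite /= in_itv /= andbT => t0.
  have xt := admissible_gt0 adm x0_gt0 t t0; have yt := y_gt0 t t0.
  rewrite funeposE /= ge_max !lee_fin; apply/andP; split.
    by apply: ler_wpM2l; [exact: expR_ge0 | exact: lnD_le_mul].
  by rewrite mulr_ge0 ?expR_ge0 // mulr_ge0 // ltW.
Qed.
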